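(* Consider a Galton–Watson branching process with offspring distribution $D=\{c_i\}_{i=0}^d$ and branching factor $b>1$, each node holding an answer independently with probability $1/n$, and let $\lambda_i=\phi_{i-1}-\phi_i$ as defined in the context. Then there exist levels $1\le \ell^1\le \ell^*$ such that: (1) $\{\lambda_i\}$ is single-peaked, peaking at $\ell^*$: for all $i\le \ell^*$, $\lambda_{i-1}\le\lambda_i$, and for all $j\ge\ell^*$, $\lambda_j>\lambda_{j+1}$; (2) there exists a constant $\rho>1$ such that $\lambda_{i+1}\ge\rho\,\lambda_i$ for all $i<\ell^1$; (3) $\lambda_{\ell^1}=\Omega(1)$, and consequently $\ell^*-\ell^1=O(1)$; (4) there exists a constant $\gamma>1$ such that $\sum_{j\ge i}\lambda_j\le\gamma\,\lambda_i$ for all $i\ge\ell^*+2$.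
   Context: Branching process: starting from the root (level $0$) of an infinite $d$-ary tree, each node independently samples a number of children $C(v)\sim D$ (where $c_i$ is the probability of $i$ children) and connects to $C(v)$ of its $d$ children chosen uniformly at random; $b=\sum_i ic_i$. Each non-root node independently holds an answer with probability $p=1/n$. Let $t(x)=\sum_{j=0}^d c_j x^j(1-\frac1n)^j$, $\phi_0=1$ and $\phi_i=t(\phi_{i-1})$ for $i\ge1$; $\phi_i$ is the probability that no active node in levels $1,\dots,i$ holds an answer, and $\lambda_i=\phi_{i-1}-\phi_i$ ($i\ge1$) is the probability that the first (lowest-level) answer lies at level $i$. The offspring distribution (hence $b$ and $d$) is fixed while $n$ is allowed to grow; ''constant'', $\Omega(1)$ and $O(1)$ mean bounds independent of $n$. *)

From Stdlib Require Import Reals.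
From Coquelicot Require Import Coquelicot.
Open Scope R_scope.

Definition is_offspring_dist (d : nat) (c : nat -> R) : Prop :=
  (forall i, (i <= d)%nat -> 0 <= c i) /\ sum_f_R0 c d = 1.

Definition branching (d : nat) (c : nat -> R) : R :=
  sum_f_R0 (fun i => INR i * c i) d.

Definition tfun (d : nat) (c : nat -> R) (n : nat) (x : R) : R :=
  sum_f_R0 (fun j => c j * x ^ j * (1 - / INR n) ^ j) d.

Fixpoint phi (d : nat) (c : nat -> R) (n : nat) (i : nat) : R :=
  match i with
  | O => 1
  | S k => tfun d c n (phi d c n k)
  end.

(* lambda_i = phi_{i-1} - phi_i, meaningful for i >= 1
   (for i = 0 this evaluates to 0 by truncated subtraction; never used). *)
Definition lam (d : nat) (c : nat -> R) (n : nat) (i : nat) : R :=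
  phi d c n (i - 1) - phi d c n i.

From Stdlib Require Import Reals Lra Lia Wf_nat Classical.
From Coquelicot Require Import Coquelicot.
Open Scope R_scope.

(* The ratio [lam (k+2) / lam (k+1)] equals [q] times the divided difference [pgf_slope] of the
   generating function [pgf] between [q phi_k] and [q phi_(k+1)]; since [phi] decreases, the
   ratio is nonincreasing, so [lam] is single-peaked where the ratio crosses 1. While [phi_k]
   stays above a threshold [thr] close to 1, the ratio is at least [rho = (1+b)/2]; the first
   level after [phi] falls below [thr] carries mass [kappa = Omega(1)], and since the [lam] sum
   to at most 1, the rest of the increasing phase has length at most [1/kappa]. At the peak a
   coefficient of order >= 2 forces the ratio to drop by a fixed [delta], giving a geometric
   tail with ratio [1 - delta]. *)

Lemma least_nat (P : nat -> Prop) :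
  (exists n, P n) -> exists n, P n /\ forall k, (k < n)%nat -> ~ P k.
Proof.
  intros HP.
  destruct (dec_inh_nat_subset_has_unique_least_element P (fun n => classic (P n)) HP)
    as [n [[Pn Hmin] _]].
  exists n. split; [exact Pn|]. intros k Hk Pk. specialize (Hmin k Pk). lia.
Qed.

Lemma pow_ge_bernoulli (e : R) (k : nat) : 0 <= e <= 1 -> 1 - INR k * e <= (1 - e) ^ k.
Proof.
  intros He. induction k as [|k IH]; [simpl; lra|].
  rewrite S_INR. simpl. pose proof (pos_INR k). pose proof (pow_le (1 - e) k ltac:(lra)). nra.
Qed.

Lemma pow_le_pow_le1 (x : R) (k m : nat) : 0 <= x <= 1 -> (k <= m)%nat -> x ^ m <= x ^ k.
Proof.
  intros Hx Hkm. induction Hkm as [|m _ IH]; [lra|].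
  simpl. pose proof (pow_le x m ltac:(lra)). nra.
Qed.

Lemma sum_f_R0_ge0 (a : nat -> R) (N : nat) :
  (forall i, (i <= N)%nat -> 0 <= a i) -> 0 <= sum_f_R0 a N.
Proof.
  intros Ha. rewrite <- (sum_eq_R0 (fun _ => 0) N) by reflexivity.
  apply sum_Rle. exact Ha.
Qed.

Lemma sum_f_R0_ge_term (a : nat -> R) (N k : nat) :
  (forall i, (i <= N)%nat -> 0 <= a i) -> (k <= N)%nat -> a k <= sum_f_R0 a N.
Proof.
  intros Ha Hk. induction N as [|N IH].
  - replace k with 0%nat by lia. simpl. lra.
  - simpl. destruct (Nat.eq_dec k (S N)) as [->|Hne].
    + pose proof (sum_f_R0_ge0 a N ltac:(intros; apply Ha; lia)). lra.
    + pose proof (Ha (S N) (le_n _)).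
      pose proof (IH ltac:(intros; apply Ha; lia) ltac:(lia)). lra.
Qed.

Lemma is_series_le_geom (u : nat -> R) (theta : R) :
  0 <= theta < 1 -> (forall k, 0 <= u k) -> (forall k, u (S k) <= theta * u k) ->
  exists s, is_series u s /\ s <= u 0%nat / (1 - theta).
Proof.
  intros Hth Hu Hstep.
  assert (Hgeo : forall k, 0 <= u k <= u 0%nat * theta ^ k).
  { induction k as [|k IH]; simpl.
    - pose proof (Hu 0%nat). lra.
    - pose proof (Hu (S k)). pose proof (Hstep k). split; [lra|]. nra. }
  assert (Hser : is_series (fun k => u 0%nat * theta ^ k) (u 0%nat * / (1 - theta))).
  { assert (Habs : Rabs theta < 1) by (rewrite Rabs_pos_eq; lra).
    exact (is_series_scal_l (u 0%nat) _ _ (is_series_geom theta Habs)). }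
  assert (Hex : ex_series u).
  { apply (@ex_series_le R_AbsRing R_CompleteNormedModule)
      with (b := fun k => u 0%nat * theta ^ k).
    - intro k. change (norm (u k)) with (Rabs (u k)). rewrite Rabs_pos_eq; apply Hgeo.
    - eexists; exact Hser. }
  exists (Series u). split; [apply Series_correct; exact Hex|].
  unfold Rdiv. rewrite <- (is_series_unique _ _ Hser).
  apply Series_le; [exact Hgeo|]. eexists; exact Hser.
Qed.

Fixpoint pow_ddiff (j : nat) (x y : R) : R :=
  match j with
  | O => 0
  | S k => x ^ k + y * pow_ddiff k x y
  end.

Lemma pow_ddiff_spec j x y : (x - y) * pow_ddiff j x y = x ^ j - y ^ j.
Proof.
  induction j as [|j IH]; simpl; [ring|].
  transitivity ((x - y) * x ^ j + y * ((x - y) * pow_ddiff j x y)); [ring|].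
  rewrite IH. ring.
Qed.

Lemma pow_ddiff_ge0 j x y : 0 <= x -> 0 <= y -> 0 <= pow_ddiff j x y.
Proof.
  intros Hx Hy. induction j as [|j IH]; simpl; [lra|].
  pose proof (pow_le x j Hx). nra.
Qed.

Lemma pow_ddiff_le j x y x' y' :
  0 <= x' <= x -> 0 <= y' <= y -> pow_ddiff j x' y' <= pow_ddiff j x y.
Proof.
  intros Hx Hy. induction j as [|j IH]; simpl; [lra|].
  pose proof (pow_incr x' x j Hx). pose proof (pow_ddiff_ge0 j x' y' ltac:(lra) ltac:(lra)).
  nra.
Qed.

Lemma pow_ddiff_diag j y : pow_ddiff (S j) y y = INR (S j) * y ^ j.
Proof.
  induction j as [|j IH]; [simpl; ring|].
  change (pow_ddiff (S (S j)) y y) with (y ^ S j + y * pow_ddiff (S j) y y).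
  rewrite IH, (S_INR (S j)). simpl. ring.
Qed.

Lemma pow_ddiff_ge_pow j x y : 0 <= x -> 0 <= y -> x ^ j <= pow_ddiff (S j) x y.
Proof. intros Hx Hy. simpl. pose proof (pow_ddiff_ge0 j x y Hx Hy). nra. Qed.

Lemma pow_ddiff_gap j x y z : 0 <= z <= y -> y <= x ->
  y ^ j * (x - z) <= pow_ddiff (S (S j)) x y - pow_ddiff (S (S j)) y z.
Proof.
  intros Hz Hy. induction j as [|j IH]; [simpl; lra|].
  change (pow_ddiff (S (S (S j))) x y) with (x ^ S (S j) + y * pow_ddiff (S (S j)) x y).
  change (pow_ddiff (S (S (S j))) y z) with (y ^ S (S j) + z * pow_ddiff (S (S j)) y z).
  pose proof (pow_incr y x (S (S j)) ltac:(lra)).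
  pose proof (pow_ddiff_ge0 (S (S j)) y z ltac:(lra) ltac:(lra)).
  pose proof (pow_le y j ltac:(lra)).
  replace (y ^ S j) with (y * y ^ j) by (simpl; ring). nra.
Qed.

Section Offspring.

Variable d : nat.
Variable c : nat -> R.
Hypothesis c_ge0 : forall i, (i <= d)%nat -> 0 <= c i.
Hypothesis c_sum1 : sum_f_R0 c d = 1.

Definition pgf (x : R) : R := sum_f_R0 (fun j => c j * x ^ j) d.

Definition pgf_slope (x y : R) : R := sum_f_R0 (fun j => c j * pow_ddiff j x y) d.

Lemma tfun_pgf n x : tfun d c n x = pgf ((1 - / INR n) * x).
Proof.
  apply sum_eq. intros j _. rewrite Rpow_mult_distr. ring.
Qed.

Lemma pgf_1 : pgf 1 = 1.
Proof.
  transitivity (sum_f_R0 c d); [|exact c_sum1].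
  apply sum_eq. intros j _. rewrite pow1. ring.
Qed.

Lemma pgf_sub x y : pgf x - pgf y = (x - y) * pgf_slope x y.
Proof.
  unfold pgf, pgf_slope. rewrite <- minus_sum, scal_sum. apply sum_eq. intros j _.
  transitivity (c j * (x ^ j - y ^ j)); [ring|]. rewrite <- pow_ddiff_spec. ring.
Qed.

Lemma pgf_slope_ge0 x y : 0 <= x -> 0 <= y -> 0 <= pgf_slope x y.
Proof.
  intros Hx Hy. apply sum_f_R0_ge0. intros j Hj.
  pose proof (c_ge0 j Hj). pose proof (pow_ddiff_ge0 j x y Hx Hy). nra.
Qed.

Lemma pgf_slope_le x y x' y' :
  0 <= x' <= x -> 0 <= y' <= y -> pgf_slope x' y' <= pgf_slope x y.
Proof.
  intros Hx Hy. apply sum_Rle. intros j Hj.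
  pose proof (c_ge0 j Hj). pose proof (pow_ddiff_le j x y x' y' Hx Hy). nra.
Qed.

Lemma pgf_slope_ge_term j x y : (j <= d)%nat -> 0 <= x -> 0 <= y ->
  c j * pow_ddiff j x y <= pgf_slope x y.
Proof.
  intros Hj Hx Hy. apply (sum_f_R0_ge_term (fun i => c i * pow_ddiff i x y)); [|exact Hj].
  intros i Hi. pose proof (c_ge0 i Hi). pose proof (pow_ddiff_ge0 i x y Hx Hy). nra.
Qed.

Lemma pgf_slope_diag y : 0 <= y <= 1 -> y ^ d * branching d c <= pgf_slope y y.
Proof.
  intros Hy. unfold branching, pgf_slope. rewrite scal_sum. apply sum_Rle. intros j Hj.
  pose proof (c_ge0 j Hj). destruct j as [|j]; [simpl; lra|].
  rewrite pow_ddiff_diag.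
  pose proof (pow_le_pow_le1 y j d Hy ltac:(lia)). pose proof (pos_INR (S j)).
  assert (0 <= c (S j) * INR (S j)) by nra. nra.
Qed.

Lemma pgf_slope_gap j x y z : (S (S j) <= d)%nat -> 0 <= z <= y -> y <= x ->
  c (S (S j)) * y ^ j * (x - z) <= pgf_slope x y - pgf_slope y z.
Proof.
  intros Hj Hz Hy. unfold pgf_slope. rewrite <- minus_sum.
  pose proof (pow_ddiff_gap j x y z Hz Hy). pose proof (c_ge0 _ Hj).
  eapply Rle_trans;
    [|apply (sum_f_R0_ge_term (fun i => c i * pow_ddiff i x y - c i * pow_ddiff i y z)); eauto].
  - cbv beta. nra.
  - intros i Hi. pose proof (c_ge0 i Hi).
    pose proof (pow_ddiff_le i x y y z ltac:(lra) ltac:(lra)). nra.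
Qed.

Lemma pgf_le x y : 0 <= y <= x -> pgf y <= pgf x.
Proof.
  intros Hxy. pose proof (pgf_sub x y).
  pose proof (pgf_slope_ge0 x y ltac:(lra) ltac:(lra)). nra.
Qed.

Lemma pgf_ge_term j x : (j <= d)%nat -> 0 <= x -> c j * x ^ j <= pgf x.
Proof.
  intros Hj Hx. apply (sum_f_R0_ge_term (fun i => c i * x ^ i)); [|exact Hj].
  intros i Hi. pose proof (c_ge0 i Hi). pose proof (pow_le x i Hx). nra.
Qed.

Lemma pgf_ge_pow x : 0 <= x <= 1 -> x ^ d <= pgf x.
Proof.
  intros Hx. unfold pgf. rewrite <- (Rmult_1_r (x ^ d)), <- c_sum1, scal_sum.
  apply sum_Rle. intros j Hj. pose proof (c_ge0 j Hj).
  pose proof (pow_le_pow_le1 x j d Hx Hj). nra.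
Qed.

Lemma exists_coef_ge2 : 1 < branching d c -> exists j, (S (S j) <= d)%nat /\ 0 < c (S (S j)).
Proof.
  intros Hb. apply NNPP. intros Hno. apply (Rlt_irrefl 1).
  apply Rlt_le_trans with (1 := Hb). rewrite <- c_sum1. apply sum_Rle. intros i Hi.
  pose proof (c_ge0 i Hi) as Hci. destruct i as [|[|i]]; simpl; [lra|lra|].
  assert (Hzero : c (S (S i)) = 0).
  { apply Rle_antisym; [|exact Hci]. apply Rnot_lt_le. intros Hpos. apply Hno. eauto. }
  rewrite Hzero. lra.
Qed.

Section Supercritical.

Hypothesis b_gt1 : 1 < branching d c.
Local Notation b := (branching d c).

Definition rho : R := (1 + b) / 2.

Definition beta : R := rho / b.

(* The exponent [S (S d * d)] is that of [q * thr_floor ^ d <= (q * thr) ^ S (S d * d)]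
   in [rho_le_q_slope]; Bernoulli then keeps such powers above [beta]. *)
Definition eps : R := (1 - beta) / INR (S (S d * d)).

Definition thr : R := 1 - eps / 2.

Definition kappa : R := (1 - thr) * (rho - 1).

Lemma rho_gt1 : 1 < rho.
Proof. unfold rho. lra. Qed.

Lemma beta_mul_b : beta * b = rho.
Proof. unfold beta. field. lra. Qed.

Lemma beta_bounds : 1 / 2 < beta < 1.
Proof.
  unfold beta, rho. split; apply Rmult_lt_reg_r with (2 * b); try lra; field_simplify; lra.
Qed.

Lemma eps_bounds : 0 < eps <= 1 / 2.
Proof.
  pose proof beta_bounds. unfold eps.
  assert (1 <= INR (S (S d * d))) by (rewrite S_INR; pose proof (pos_INR (S d * d)); lra).
  split; [apply Rdiv_lt_0_compat; lra|].
  apply Rmult_le_reg_r with (INR (S (S d * d))); [lra|]. field_simplify; lra.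
Qed.

Lemma thr_bounds : 3 / 4 <= thr < 1.
Proof. pose proof eps_bounds. unfold thr. lra. Qed.

Lemma kappa_pos : 0 < kappa.
Proof. pose proof eps_bounds. pose proof rho_gt1. unfold kappa, thr. nra. Qed.

Lemma beta_le_pow w k : 1 - eps <= w <= 1 -> (k <= S (S d * d))%nat -> beta <= w ^ k.
Proof.
  intros Hw Hk. pose proof eps_bounds. pose proof beta_bounds.
  replace w with (1 - (1 - w)) by ring.
  pose proof (pow_ge_bernoulli (1 - w) k ltac:(lra)).
  pose proof (le_INR _ _ Hk). pose proof (pos_INR k).
  pose proof (lt_0_INR _ (Nat.lt_0_succ (S d * d))).
  assert (INR (S (S d * d)) * eps = 1 - beta) by (unfold eps; field; lra).
  assert (INR k * (1 - w) <= INR (S (S d * d)) * eps) by (apply Rmult_le_compat; lra).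
  lra.
Qed.

Lemma kappa_le_thr_sub_pgf : kappa <= thr - pgf thr.
Proof.
  pose proof eps_bounds. assert (Hthr : 1 - eps <= thr <= 1) by (unfold thr; lra).
  pose proof (pgf_sub 1 thr) as Hsub. rewrite pgf_1 in Hsub.
  pose proof (pgf_slope_le 1 thr thr thr ltac:(lra) ltac:(lra)).
  pose proof (pgf_slope_diag thr ltac:(lra)).
  pose proof (beta_le_pow thr d Hthr ltac:(simpl; lia)).
  pose proof (pow_le thr d ltac:(lra)). pose proof beta_mul_b.
  assert (rho <= pgf_slope 1 thr) by nra.
  unfold kappa. nra.
Qed.

Variable j : nat.
Hypothesis j_le : (S (S j) <= d)%nat.
Hypothesis c_j_pos : 0 < c (S (S j)).

Definition eta : R := c (S (S j)) * (kappa / 2) ^ S (S j) / 2.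

Definition delta : R := c (S (S j)) * eta ^ j * kappa / 4.

Definition gamma : R := / delta + 1.

Lemma eta_pos : 0 < eta.
Proof.
  pose proof kappa_pos. unfold eta.
  pose proof (pow_lt (kappa / 2) (S (S j)) ltac:(lra)). nra.
Qed.

Lemma delta_pos : 0 < delta.
Proof.
  pose proof kappa_pos. pose proof (pow_lt eta j eta_pos). unfold delta.
  assert (0 < c (S (S j)) * eta ^ j) by nra. nra.
Qed.

Lemma gamma_gt1 : 1 < gamma.
Proof. pose proof (Rinv_0_lt_compat _ delta_pos). unfold gamma. lra. Qed.

Variable n : nat.
Hypothesis n_large : 2 / eps < INR n.

Local Notation q := (1 - / INR n).
Local Notation phi_n := (phi d c n).
Local Notation lam_n := (lam d c n).

Lemma q_bounds : thr <= q < 1.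
Proof.
  pose proof eps_bounds. assert (H2e : 0 < 2 / eps) by (apply Rdiv_lt_0_compat; lra).
  pose proof (Rinv_0_lt_compat (INR n) ltac:(lra)).
  pose proof (Rinv_le_contravar _ (INR n) H2e ltac:(lra)).
  replace (/ (2 / eps)) with (eps / 2) in * by (field; lra).
  unfold thr. lra.
Qed.

Lemma phi_S k : phi_n (S k) = pgf (q * phi_n k).
Proof. apply tfun_pgf. Qed.

Lemma lam_S k : lam_n (S k) = phi_n k - phi_n (S k).
Proof. unfold lam. simpl. rewrite Nat.sub_0_r. reflexivity. Qed.

Definition lam_ratio (k : nat) : R := q * pgf_slope (q * phi_n k) (q * phi_n (S k)).

Lemma lam_SS k : lam_n (S (S k)) = lam_ratio k * lam_n (S k).
Proof.
  rewrite !lam_S, (phi_S (S k)). unfold lam_ratio.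
  pose proof (pgf_sub (q * phi_n k) (q * phi_n (S k))) as Hsub.
  rewrite <- phi_S in Hsub. rewrite Hsub. ring.
Qed.

Lemma phi_pos k : 0 < phi_n k.
Proof.
  pose proof q_bounds. pose proof thr_bounds.
  induction k as [|k IH]; [simpl; lra|]. rewrite phi_S.
  pose proof (pgf_ge_term _ (q * phi_n k) j_le ltac:(nra)).
  pose proof (pow_lt (q * phi_n k) (S (S j)) ltac:(nra)). nra.
Qed.

Lemma lam_ratio_pos k : 0 < lam_ratio k.
Proof.
  pose proof q_bounds. pose proof thr_bounds.
  pose proof (phi_pos k). pose proof (phi_pos (S k)).
  assert (Hx : 0 < q * phi_n k) by nra. assert (Hy : 0 < q * phi_n (S k)) by nra.
  pose proof (pgf_slope_ge_term _ _ _ j_le (Rlt_le _ _ Hx) (Rlt_le _ _ Hy)).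
  pose proof (pow_ddiff_ge_pow (S j) _ _ (Rlt_le _ _ Hx) (Rlt_le _ _ Hy)).
  pose proof (pow_lt _ (S j) Hx). unfold lam_ratio.
  apply Rmult_lt_0_compat; [lra|nra].
Qed.

Lemma lam_pos k : 0 < lam_n (S k).
Proof.
  induction k as [|k IH].
  - pose proof q_bounds. pose proof thr_bounds.
    rewrite lam_S, phi_S. simpl phi. rewrite Rmult_1_r, <- pgf_1 at 1.
    rewrite pgf_sub.
    pose proof (pgf_slope_ge_term _ 1 q j_le ltac:(lra) ltac:(lra)).
    pose proof (pow_ddiff_ge_pow (S j) 1 q ltac:(lra) ltac:(lra)). rewrite pow1 in *.
    apply Rmult_lt_0_compat; nra.
  - rewrite lam_SS. pose proof (lam_ratio_pos k). nra.
Qed.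

Lemma phi_S_le k : phi_n (S k) <= phi_n k.
Proof. pose proof (lam_pos k). rewrite lam_S in *. lra. Qed.

Lemma phi_le1 k : phi_n k <= 1.
Proof. induction k as [|k IH]; [simpl; lra|]. pose proof (phi_S_le k). lra. Qed.

Lemma lam_ratio_S_le k : lam_ratio (S k) <= lam_ratio k.
Proof.
  pose proof q_bounds. pose proof thr_bounds.
  pose proof (phi_pos (S (S k))). pose proof (phi_S_le k). pose proof (phi_S_le (S k)).
  unfold lam_ratio. apply Rmult_le_compat_l; [lra|].
  apply pgf_slope_le; split; nra.
Qed.

Lemma lam_ratio_antitone i k : (i <= k)%nat -> lam_ratio k <= lam_ratio i.
Proof.
  induction 1 as [|k _ IH]; [lra|]. pose proof (lam_ratio_S_le k). lra.
Qed.

Definition thr_floor : R := (q * thr) ^ S d.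

Lemma q_thr_bounds : 1 - eps <= q * thr <= 1.
Proof. pose proof q_bounds. pose proof eps_bounds. unfold thr in *. split; nra. Qed.

Lemma thr_floor_bounds : 0 <= thr_floor <= q * thr.
Proof.
  pose proof q_thr_bounds. pose proof eps_bounds. unfold thr_floor.
  split; [apply pow_le; lra|].
  pose proof (pow_le_pow_le1 (q * thr) 1 (S d) ltac:(lra) ltac:(lia)). rewrite pow_1 in *. lra.
Qed.

Lemma thr_floor_le_pgf : thr_floor <= q * pgf (q * thr).
Proof.
  pose proof q_thr_bounds. pose proof eps_bounds. pose proof thr_bounds.
  pose proof (pgf_ge_pow (q * thr) ltac:(lra)). pose proof (pow_le (q * thr) d ltac:(lra)).
  assert (q * thr <= q) by nra.
  unfold thr_floor. simpl pow. nra.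
Qed.

Lemma rho_le_q_slope x y : thr_floor <= x -> thr_floor <= y -> rho <= q * pgf_slope x y.
Proof.
  intros Hx Hy. pose proof thr_floor_bounds. pose proof q_thr_bounds. pose proof q_bounds.
  pose proof thr_bounds.
  pose proof (pgf_slope_le x y thr_floor thr_floor ltac:(lra) ltac:(lra)).
  pose proof (pgf_slope_diag thr_floor ltac:(lra)).
  assert (Hbeta : beta <= q * thr_floor ^ d).
  { unfold thr_floor. rewrite <- pow_mult.
    pose proof (beta_le_pow (q * thr) (S (S d * d)) ltac:(lra) (le_n _)) as Hb.
    change ((q * thr) ^ S (S d * d)) with (q * thr * (q * thr) ^ (S d * d)) in Hb.
    pose proof (pow_le (q * thr) (S d * d) ltac:(lra)).
    assert (q * thr <= q) by nra. nra. }
  pose proof beta_mul_b. assert (0 <= q) by lra.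
  assert (q * (thr_floor ^ d * branching d c) <= q * pgf_slope x y)
    by (apply Rmult_le_compat_l; lra).
  assert (beta * branching d c <= q * thr_floor ^ d * branching d c)
    by (apply Rmult_le_compat_r; lra).
  lra.
Qed.

Lemma rho_le_lam_ratio k : thr <= phi_n k -> rho <= lam_ratio k.
Proof.
  intros Hk. pose proof thr_floor_bounds. pose proof thr_floor_le_pgf. pose proof q_bounds.
  pose proof thr_bounds. apply rho_le_q_slope.
  - nra.
  - rewrite phi_S. pose proof (pgf_le (q * phi_n k) (q * thr) ltac:(nra)).
    nra.
Qed.

Lemma lam_ratio_lt1_eventually : exists k, lam_ratio k < 1.
Proof.
  apply NNPP. intros Hno.
  assert (Hge : forall k, lam_n 1 <= lam_n (S k)).
  { induction k as [|k IH]; [lra|]. rewrite lam_SS.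
    assert (1 <= lam_ratio k) by (apply Rnot_lt_le; intros Hk; apply Hno; eauto).
    pose proof (lam_pos k). nra. }
  assert (Hlin : forall k, phi_n k <= 1 - INR k * lam_n 1).
  { induction k as [|k IH]; [simpl; lra|].
    pose proof (lam_S k). pose proof (Hge k). rewrite S_INR. lra. }
  pose proof (lam_pos 0). destruct (INR_unbounded (/ lam_n 1)) as [k Hk].
  pose proof (Hlin k). pose proof (phi_pos k).
  apply Rmult_gt_compat_r with (r := lam_n 1) in Hk; [|lra].
  rewrite Rinv_l in Hk; lra.
Qed.

(* [x - pgf (q x)] exceeds the gap at [thr] because [q * pgf_slope >= rho >= 1] on this range. *)
Lemma kappa_le_sub_pgf x : pgf (q * thr) <= x <= thr -> kappa <= x - pgf (q * x).
Proof.
  intros Hx. pose proof thr_floor_le_pgf. pose proof q_bounds.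
  pose proof thr_bounds. pose proof rho_gt1.
  assert (Hslope : rho <= q * pgf_slope (q * x) (q * thr)).
  { apply rho_le_q_slope; nra. }
  pose proof (pgf_sub (q * x) (q * thr)).
  pose proof (pgf_le thr (q * thr) ltac:(nra)).
  pose proof kappa_le_thr_sub_pgf.
  assert (0 <= (thr - x) * (q * pgf_slope (q * x) (q * thr) - 1)) by (apply Rmult_le_pos; lra).
  nra.
Qed.

(* The coefficient [c (S (S j))] makes [pgf_slope] strictly increasing, so the ratio
   drops by a fixed amount as soon as [lam] is of order [kappa]. *)
Lemma lam_ratio_drop k : kappa <= lam_n (S k) -> delta <= lam_ratio k - lam_ratio (S k).
Proof.
  intros Hk. pose proof q_bounds. pose proof thr_bounds. pose proof kappa_pos.
  assert (Hq : 1 / 2 <= q) by lra.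
  pose proof (lam_S k) as Hlam. pose proof (lam_pos (S k)) as Hlam'. rewrite lam_S in Hlam'.
  pose proof (phi_pos (S (S k))).
  set (x := q * phi_n k). set (y := q * phi_n (S k)). set (z := q * phi_n (S (S k))).
  assert (Hgap : q * kappa <= x - z) by (unfold x, z; nra).
  assert (Hy : eta <= y).
  { assert (Hx2 : kappa / 2 <= q * phi_n k) by nra.
    pose proof (pow_incr _ _ (S (S j)) (conj (ltac:(lra) : 0 <= kappa / 2) Hx2)) as Hpow.
    pose proof (pgf_ge_term _ (q * phi_n k) j_le ltac:(lra)) as Hterm.
    assert (c (S (S j)) * (kappa / 2) ^ S (S j) <= pgf (q * phi_n k))
      by (apply Rle_trans with (2 := Hterm); apply Rmult_le_compat_l; lra).
    pose proof (pow_le (kappa / 2) (S (S j)) ltac:(lra)).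
    assert (0 <= c (S (S j)) * (kappa / 2) ^ S (S j)) by (apply Rmult_le_pos; lra).
    unfold y, eta. rewrite phi_S. nra. }
  pose proof eta_pos. pose proof (pow_incr eta y j ltac:(lra)).
  pose proof (pgf_slope_gap j x y z j_le ltac:(unfold y, z; nra) ltac:(unfold x, y; nra)).
  assert (Hdelta : delta <= q * (c (S (S j)) * y ^ j * (x - z))).
  { pose proof (pow_le eta j ltac:(lra)). unfold delta.
    assert (c (S (S j)) * eta ^ j <= c (S (S j)) * y ^ j) by (apply Rmult_le_compat_l; lra).
    assert (0 <= c (S (S j)) * eta ^ j) by nra.
    assert (c (S (S j)) * eta ^ j * (q * kappa) <= c (S (S j)) * y ^ j * (x - z))
      by (apply Rmult_le_compat; nra).
    assert (1 / 4 <= q * q) by nra.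
    assert (1 / 4 * (c (S (S j)) * eta ^ j * kappa) <= q * q * (c (S (S j)) * eta ^ j * kappa))
      by (apply Rmult_le_compat_r; nra).
    assert (q * (c (S (S j)) * eta ^ j * (q * kappa)) <= q * (c (S (S j)) * y ^ j * (x - z)))
      by (apply Rmult_le_compat_l; lra).
    nra. }
  unfold lam_ratio. fold x y z. nra.
Qed.

Lemma lam_monotone_upto p : (forall k, (k < p)%nat -> 1 <= lam_ratio k) ->
  forall i k, (1 <= i)%nat -> (i <= k)%nat -> (k <= S p)%nat -> lam_n i <= lam_n k.
Proof.
  intros Hp i k Hi Hik Hk. induction Hik as [|k Hik IH]; [lra|].
  destruct k as [|k]; [lia|]. rewrite lam_SS.
  pose proof (Hp k ltac:(lia)). pose proof (lam_pos k). pose proof (IH ltac:(lia)). nra.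
Qed.

Lemma lam_decreasing_from p : lam_ratio p < 1 ->
  forall k, (S p <= k)%nat -> lam_n (k + 1) < lam_n k.
Proof.
  intros Hp k Hk. destruct k as [|k]; [lia|]. rewrite Nat.add_1_r, lam_SS.
  pose proof (lam_ratio_antitone p k ltac:(lia)). pose proof (lam_pos k). nra.
Qed.

Lemma lam_growth m : (forall k, (k < m)%nat -> thr <= phi_n k) ->
  forall i, (1 <= i)%nat -> (i <= m)%nat -> rho * lam_n i <= lam_n (i + 1).
Proof.
  intros Hm i Hi Him. destruct i as [|i]; [lia|]. rewrite Nat.add_1_r, lam_SS.
  pose proof (rho_le_lam_ratio i (Hm i ltac:(lia))). pose proof (lam_pos i). nra.
Qed.

Lemma kappa_le_lam_cross m : thr <= phi_n m -> phi_n (S m) <= thr -> kappa <= lam_n (S (S m)).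
Proof.
  intros Hm HSm. pose proof q_bounds. pose proof thr_bounds.
  rewrite lam_S, (phi_S (S m)). apply kappa_le_sub_pgf. split; [|exact HSm].
  rewrite phi_S. apply pgf_le. split; [nra|]. apply Rmult_le_compat_l; lra.
Qed.

Lemma phi_telescope a k :
  phi_n a - phi_n (S (a + k)) = sum_f_R0 (fun i => lam_n (S (a + i))) k.
Proof.
  induction k as [|k IH]; simpl sum_f_R0; rewrite <- ?IH, !lam_S, ?Nat.add_0_r;
    [lra|]. rewrite Nat.add_succ_r. lra.
Qed.

Lemma plateau_length a k : (forall i, (i <= k)%nat -> kappa <= lam_n (S (a + i))) ->
  kappa * INR (S k) <= 1.
Proof.
  intros Hk. rewrite <- sum_cte.
  apply Rle_trans with (sum_f_R0 (fun i => lam_n (S (a + i))) k); [apply sum_Rle; exact Hk|].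
  rewrite <- phi_telescope. pose proof (phi_le1 a). pose proof (phi_pos (S (a + k))). lra.
Qed.

Lemma lam_tail p : lam_ratio p < 1 -> kappa <= lam_n (S p) ->
  forall i, (S p + 2 <= i)%nat ->
    exists s, is_series (fun k => lam_n (i + k)) s /\ s <= gamma * lam_n i.
Proof.
  intros Hp Hkappa i Hi. pose proof (lam_ratio_drop p Hkappa). pose proof delta_pos.
  pose proof (lam_ratio_pos (S p)).
  destruct (is_series_le_geom (fun k => lam_n (i + k)) (lam_ratio (S p))) as [s [Hs Hsle]].
  - lra.
  - intros k. destruct i as [|i]; [lia|]. pose proof (lam_pos (i + k)). simpl. lra.
  - intros k. destruct i as [|[|i]]; [lia|lia|].
    replace (S (S i) + S k)%nat with (S (S (S (i + k)))) by lia.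
    replace (S (S i) + k)%nat with (S (S (i + k))) by lia.
    rewrite lam_SS. pose proof (lam_ratio_antitone (S p) (S (i + k)) ltac:(lia)).
    pose proof (lam_pos (S (i + k))). nra.
  - exists s. split; [exact Hs|]. rewrite Nat.add_0_r in Hsle.
    destruct i as [|i]; [lia|]. pose proof (lam_pos i).
    assert (/ (1 - lam_ratio (S p)) <= / delta) by (apply Rinv_le_contravar; lra).
    unfold gamma. unfold Rdiv in Hsle. nra.
Qed.

Lemma lam_profile (C : nat) : / kappa < INR C ->
  exists l1 ls : nat,
    (1 <= l1)%nat /\ (l1 <= ls)%nat /\
    (forall i : nat, (2 <= i)%nat -> (i <= ls)%nat -> lam_n (i - 1) <= lam_n i) /\
    (forall j : nat, (ls <= j)%nat -> lam_n j > lam_n (j + 1)) /\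
    (forall i : nat, (1 <= i)%nat -> (i < l1)%nat -> lam_n (i + 1) >= rho * lam_n i) /\
    kappa <= lam_n l1 /\
    (ls - l1 <= C)%nat /\
    (forall i : nat, (ls + 2 <= i)%nat ->
        exists s : R, is_series (fun k : nat => lam_n (i + k)) s /\ s <= gamma * lam_n i).
Proof.
  intros HC. pose proof rho_gt1. pose proof kappa_pos. pose proof eps_bounds.
  destruct (least_nat _ lam_ratio_lt1_eventually) as [p [Hp Hbefore]].
  assert (Hratio1 : forall k, (k < p)%nat -> 1 <= lam_ratio k)
    by (intros k Hk; apply Rnot_lt_le, Hbefore, Hk).
  assert (Hphip : phi_n p <= thr).
  { apply Rnot_lt_le. intros Hlt. pose proof (rho_le_lam_ratio p ltac:(lra)). lra. }
  destruct (least_nat (fun k => phi_n k <= thr) (ex_intro _ p Hphip)) as [[|m] [Hm Hmin]].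
  { simpl in Hm. pose proof thr_bounds. lra. }
  assert (Habove : forall k, (k < S m)%nat -> thr <= phi_n k)
    by (intros k Hk; apply Rlt_le, Rnot_le_lt, Hmin, Hk).
  assert (Hmp : (S m <= p)%nat).
  { destruct (Nat.lt_ge_cases p (S m)) as [Hlt|]; [|assumption].
    exfalso. exact (Hmin p Hlt Hphip). }
  assert (Hplateau : forall i, (S (S m) <= i)%nat -> (i <= S p)%nat -> kappa <= lam_n i).
  { intros i Hi1 Hi2.
    pose proof (kappa_le_lam_cross m (Habove m (Nat.lt_succ_diag_r m)) Hm).
    pose proof (lam_monotone_upto p Hratio1 (S (S m)) i ltac:(lia) Hi1 Hi2). lra. }
  exists (S (S m)), (S p). repeat split; try lia.
  - intros i Hi1 Hi2. apply (lam_monotone_upto p Hratio1); lia.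
  - intros k Hk. apply (lam_decreasing_from p Hp k Hk).
  - intros i Hi1 Hi2. apply Rle_ge, (lam_growth (S m) Habove); lia.
  - apply Hplateau; lia.
  - assert (Hlen : kappa * INR (S (p - S m)) <= 1).
    { apply (plateau_length (S m)). intros i Hi. apply Hplateau; lia. }
    rewrite S_INR in Hlen. apply Rmult_lt_compat_l with (r := kappa) in HC; [|lra].
    rewrite Rinv_r in HC by lra.
    assert (Hlt : INR (S p - S (S m)) < INR C).
    { replace (S p - S (S m))%nat with (p - S m)%nat by lia.
      pose proof (pos_INR (p - S m)). nra. }
    apply INR_lt in Hlt. lia.
  - apply (lam_tail p Hp (Hplateau (S p) ltac:(lia) (le_n _))).
Qed.

End Supercritical.
End Offspring.

Theorem lemma3p1 (d : nat) (c : nat -> R) :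
  is_offspring_dist d c ->
  1 < branching d c ->
  exists (rho gamma kappa : R) (C N : nat),
    1 < rho /\ 1 < gamma /\ 0 < kappa /\
    forall n : nat, (N <= n)%nat ->
      exists l1 ls : nat,
        (1 <= l1)%nat /\ (l1 <= ls)%nat /\
        (forall i : nat, (2 <= i)%nat -> (i <= ls)%nat ->
            lam d c n (i - 1) <= lam d c n i) /\
        (forall j : nat, (ls <= j)%nat -> lam d c n j > lam d c n (j + 1)) /\
        (forall i : nat, (1 <= i)%nat -> (i < l1)%nat ->
            lam d c n (i + 1) >= rho * lam d c n i) /\
        kappa <= lam d c n l1 /\
        (ls - l1 <= C)%nat /\
        (forall i : nat, (ls + 2 <= i)%nat ->
            exists s : R, is_series (fun k : nat => lam d c n (i + k)) s /\
                          s <= gamma * lam d c n i).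
Proof.
  intros [c_ge0 c_sum1] b_gt1.
  destruct (exists_coef_ge2 d c c_ge0 c_sum1 b_gt1) as [j [j_le c_j_pos]].
  destruct (INR_unbounded (/ kappa d c)) as [C HC].
  destruct (INR_unbounded (2 / eps d c)) as [N HN].
  exists (rho d c), (gamma d c j), (kappa d c), C, N.
  split; [exact (rho_gt1 d c b_gt1)|].
  split; [exact (gamma_gt1 d c b_gt1 j c_j_pos)|].
  split; [exact (kappa_pos d c b_gt1)|].
  intros n Hn. pose proof (le_INR _ _ Hn).
  apply (lam_profile d c c_ge0 c_sum1 b_gt1 j j_le c_j_pos n); lra.
Qed.
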